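(* Let $Q$ be a finite quiver with vertex set $Q_0$ and arrow set $Q_1$, let $k$ be an algebraically closed field of arbitrary characteristic, and let $\Theta,\sigma:\mathbb{Z}Q_0\to\mathbb{Z}$ be linear functions with $\sigma_v>0$ for all $v\in Q_0$. Let $M$ be a finite dimensional representation of $Q$ over $k$ which is not $(\Theta,\sigma)$-semistable. Let $0\subset M_1\subset\cdots\subset M_t\subset M_{t+1}=M$ together with real weights $\Gamma_1<\Gamma_2<\cdots<\Gamma_{t+1}$ be the Kempf filtration of $M$, i.e. the weighted filtration of $M$ by subrepresentations at which the Kempf function $$K(M_\bullet,\Gamma)=\frac{\sum_{i=1}^{t+1}\Gamma_i\,[\Theta(M)\sigma(M^i)-\sigma(M)\Theta(M^i)]}{\sqrt{\sum_{i=1}^{t+1}\sigma(M^i)\Gamma_i^2}},\qquad M^i=M_i/M_{i-1},$$ attains its maximum among all weighted filtrations of $M$ by subrepresentations with strictly increasing real weights. Then the filtration $0\subset M_1\subset\cdots\subset M_{t+1}=M$ is the Harder-Narasimhan filtration of $M$ with respect to $(\Theta,\sigma)$.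
   Context: A representation $M$ of $Q$ over $k$ consists of finite dimensional $k$-vector spaces $M_v$ ($v\in Q_0$) and $k$-linear maps $M_\alpha:M_{v_i}\to M_{v_j}$ for each arrow $\alpha:v_i\to v_j$; its dimension vector is $\underline{\dim}M=\sum_v \dim_k M_v\cdot v\in\mathbb{N}Q_0$. Write $\Theta(M)=\sum_v\Theta_v\dim_kM_v$ and $\sigma(M)=\sum_v\sigma_v\dim_kM_v$, and for $M\neq 0$ define the slope $\mu_{(\Theta,\sigma)}(M)=\Theta(M)/\sigma(M)$. $M$ is $(\Theta,\sigma)$-semistable if $\mu_{(\Theta,\sigma)}(M')\le\mu_{(\Theta,\sigma)}(M)$ for all non-zero proper subrepresentations $M'\subset M$. A weighted filtration is a chain of subrepresentations $0\subset M_1\subset\cdots\subset M_{t+1}=M$ with strict inclusions (so each $M^i\neq0$ and $\sigma(M^i)>0$) together with real numbers $\Gamma_1<\cdots<\Gamma_{t+1}$. For an unstable $M$, such a maximizing weighted filtration exists and its filtration is unique (Kempf's theorem, applied to the action of $\prod_v GL(M_v)$ on the representation space with the character $\prod_v\det(g_v)^{\Theta(d)\sigma_v-\sigma(d)\Theta_v}$ and the length $\sqrt{\sum_i\sigma(M^i)\Gamma_i^2}$). The Harder-Narasimhan filtration of $M$ is the unique filtration $0\subset M_1\subset\cdots\subset M_{t+1}=M$ by subrepresentations such that, with $M^i=M_i/M_{i-1}$, one has $\mu_{(\Theta,\sigma)}(M^1)>\mu_{(\Theta,\sigma)}(M^2)>\cdots>\mu_{(\Theta,\sigma)}(M^{t+1})$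 and each $M^i$ is $(\Theta,\sigma)$-semistable. *)

From HB Require Import structures.
From mathcomp Require Import all_boot all_order all_algebra.
From mathcomp Require Import Rstruct.
Set Implicit Arguments. Unset Strict Implicit. Unset Printing Implicit Defensive.
Import Order.TTheory GRing.Theory Num.Theory.
Local Open Scope ring_scope.

Section QuiverReps.
Variables (V A : finType) (src tgt : A -> V) (k : fieldType).

(* A representation: dim M_v = rdim v, and for each arrow a : v -> w a k-linear
   map M_a : k^(rdim v) -> k^(rdim w), given as a matrix acting on row vectors
   (x |-> x *m rmap a). *)
Record rep := Rep {
  rdim : V -> nat;
  rmap : forall a : A, 'M[k]_(rdim (src a), rdim (tgt a)) }.

(* A family of subspaces U_v of M_v (the row space of the matrix U v). *)
Definition subfam (M : rep) := forall v : V, 'M[k]_(rdim M v).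

Definition is_subrep (M : rep) (U : subfam M) : Prop :=
  forall a : A, (U (src a) *m rmap M a <= U (tgt a))%MS.

Definition sub_le (M : rep) (U W : subfam M) : Prop := forall v, (U v <= W v)%MS.
Definition sub_lt (M : rep) (U W : subfam M) : Prop := sub_le U W /\ ~ sub_le W U.

Definition zero_sub (M : rep) : subfam M := fun v => 0.
Definition full_sub (M : rep) : subfam M := fun v => 1%:M.

(* For U <= W, the linear function c : Z Q_0 -> Z evaluated at the dimension
   vector of the subquotient W/U. *)
Definition sq_lin (M : rep) (c : V -> int) (U W : subfam M) : int :=
  \sum_(v : V) c v * ((\rank (W v))%:Z - (\rank (U v))%:Z).

Definition sq_slope (M : rep) (Th sg : V -> int) (U W : subfam M) : Rdefinitions.R :=
  (sq_lin Th U W)%:~R / (sq_lin sg U W)%:~R.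

(* (Theta,sigma)-semistability of the subquotient representation W/U (U <= W
   subrepresentations of M): subrepresentations of W/U are G/U with U <= G <= W,
   G a subrepresentation of M; non-zero proper means U < G < W. *)
Definition semistable_sq (M : rep) (Th sg : V -> int) (U W : subfam M) : Prop :=
  forall G : subfam M, is_subrep G -> sub_lt U G -> sub_lt G W ->
    sq_slope Th sg U G <= sq_slope Th sg U W.

Definition semistable (M : rep) (Th sg : V -> int) : Prop :=
  semistable_sq Th sg (zero_sub M) (full_sub M).

(* A filtration 0 = F 0 < F 1 < ... < F n = M by subrepresentations with strict
   inclusions (n = t+1 >= 1). *)
Definition filtration (M : rep) (n : nat) (F : nat -> subfam M) : Prop :=
  [/\ (0 < n)%N,
      (forall i, (i <= n)%N -> is_subrep (F i)),
      sub_le (F 0%N) (zero_sub M),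
      sub_le (full_sub M) (F n) &
      (forall i, (i < n)%N -> sub_lt (F i) (F i.+1))].

Definition weighted_filtration (M : rep) (n : nat) (F : nat -> subfam M)
    (Ga : nat -> Rdefinitions.R) : Prop :=
  filtration n F /\ (forall i, (1 <= i < n)%N -> Ga i < Ga i.+1).

Definition kempf (M : rep) (Th sg : V -> int) (n : nat) (F : nat -> subfam M)
    (Ga : nat -> Rdefinitions.R) : Rdefinitions.R :=
  (\sum_(1 <= i < n.+1)
      Ga i * ((sq_lin Th (zero_sub M) (full_sub M))%:~R
                * (sq_lin sg (F i.-1) (F i))%:~R
              - (sq_lin sg (zero_sub M) (full_sub M))%:~R
                * (sq_lin Th (F i.-1) (F i))%:~R))
  / Num.sqrt (\sum_(1 <= i < n.+1) (sq_lin sg (F i.-1) (F i))%:~R * Ga i ^+ 2).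

Definition is_HN_filtration (M : rep) (Th sg : V -> int) (n : nat)
    (F : nat -> subfam M) : Prop :=
  [/\ filtration n F,
      (forall i, (1 <= i < n)%N ->
         sq_slope Th sg (F i.-1) (F i) > sq_slope Th sg (F i) (F i.+1)) &
      (forall i, (1 <= i <= n)%N -> semistable_sq Th sg (F i.-1) (F i))].

End QuiverReps.

From HB Require Import structures.
From mathcomp Require Import all_boot all_order all_algebra.
From mathcomp Require Import Rstruct.
From mathcomp Require Import ring lra zify.
Import Order.TTheory GRing.Theory Num.Theory.
Set Implicit Arguments. Unset Strict Implicit. Unset Printing Implicit Defensive.
Local Open Scope ring_scope.

(* The Kempf function of a weighted filtration is the ratio <Ga, a> / |Ga|_d, where
   d_i = sigma(M^i), a_i = Theta(M) sigma(M^i) - sigma(M) Theta(M^i) and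
   |Ga|_d^2 = sum_i d_i Ga_i^2.  Instability makes its maximum positive.  Moving the
   weights a little towards the vector (a_i / d_i) keeps them increasing and, by
   Cauchy-Schwarz, strictly increases the ratio unless Ga is already a positive multiple
   of that vector; hence Ga_i = c (Theta(M) - sigma(M) mu(M^i)) and increasing weights
   mean decreasing slopes.  If some M^i had a subrepresentation of larger slope,
   inserting it into the filtration and splitting Ga_i slightly would raise the
   numerator to first order and the squared denominator only to second order,
   contradicting maximality. *)

Section RatioAlgebra.
Variable R : rcfType.

Lemma exists_small_gt0 (I : eqType) (r : seq I) (x y : I -> R) :
  {in r, forall j, 0 < y j} -> exists2 e : R, 0 < e & {in r, forall j, e * x j < y j}.
Proof.
move=> y_gt0.
suff [e e_gt0 He] : exists2 e : R, 0 < e & {in r, forall j, e * `|x j| < y j}.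
  exists e => // j jr; apply: le_lt_trans (He j jr).
  by rewrite ler_pM2l // ler_norm.
elim: r y_gt0 => [|j0 r IH] y_gt0; first by exists 1.
have [e e_gt0 He] : exists2 e : R, 0 < e & {in r, forall j, e * `|x j| < y j}.
  by apply: IH => j jr; apply: y_gt0; rewrite inE jr orbT.
have y0_gt0 := y_gt0 j0 (mem_head _ _).
have x0_gt0 : 0 < `|x j0| + 1 by rewrite ltr_wpDl.
exists (Order.min e (y j0 / (`|x j0| + 1))); first by rewrite lt_min e_gt0 divr_gt0.
move=> j; rewrite inE => /predU1P [-> | jr].
- apply: (@le_lt_trans _ _ (y j0 / (`|x j0| + 1) * `|x j0|)).
    by rewrite ler_wpM2r // ge_min lexx orbT.
  by rewrite mulrAC ltr_pdivrMr // mulrDr mulr1 ltrDl.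
- by apply: le_lt_trans (He j jr); rewrite ler_wpM2r // ge_min lexx.
Qed.

Lemma ltr_frac (p q r s : R) : 0 < q -> 0 < s -> (p / q < r / s) = (p * s < r * q).
Proof. by move=> q_gt0 s_gt0; rewrite ltr_pdivrMr // mulrAC ltr_pdivlMr. Qed.

Lemma ltr_div_sqrt (N D N' D' : R) : 0 < N -> 0 < D -> 0 < N' -> 0 < D' ->
  N ^+ 2 * D' < N' ^+ 2 * D -> N / Num.sqrt D < N' / Num.sqrt D'.
Proof.
move=> N_gt0 D_gt0 N'_gt0 D'_gt0 ltND.
rewrite ltr_frac ?sqrtr_gt0 // -(@ltr_pXn2r _ 2) //; last 2 first.
- by rewrite nnegrE mulr_ge0 ?sqrtr_ge0 ?ltW.
- by rewrite nnegrE mulr_ge0 ?sqrtr_ge0 ?ltW.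
by rewrite !exprMn !sqr_sqrtr ?ltW.
Qed.

Lemma div_sqrt_gt0 (N D : R) : 0 <= D -> 0 < N / Num.sqrt D -> 0 < N /\ 0 < D.
Proof.
move=> D_ge0 ND_gt0.
have D_gt0 : 0 < D.
  rewrite lt_def D_ge0 andbT; apply: contraTneq ND_gt0 => ->.
  by rewrite sqrtr0 invr0 mulr0 ltxx.
by move: ND_gt0; rewrite pmulr_lgt0 ?invr_gt0 ?sqrtr_gt0.
Qed.

Lemma ltr_div_sqrt_step (N D P Q e : R) :
  0 < N -> 0 < D -> 0 < P -> 0 < Q -> 0 < e -> e * (N * Q) < P * D ->
  N / Num.sqrt D < (N + e * P) / Num.sqrt (D + e ^+ 2 * Q).
Proof.
move=> N_gt0 D_gt0 P_gt0 Q_gt0 e_gt0 small_e.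
apply: ltr_div_sqrt => //; rewrite ?addr_gt0 ?mulr_gt0 ?exprn_gt0 //.
have : e * N * (e * (N * Q)) < e * N * (P * D) by rewrite ltr_pM2l ?mulr_gt0.
have : 0 < e * P * (e * P * D) by rewrite !mulr_gt0.
have : 0 < e * N * (P * D) by rewrite !mulr_gt0.
nra.
Qed.

Definition kempf_ratio (n : nat) (d a G : nat -> R) : R :=
  (\sum_(1 <= i < n.+1) G i * a i) / Num.sqrt (\sum_(1 <= i < n.+1) d i * G i ^+ 2).

Section Shift.
Variables (n : nat) (d a G : nat -> R).
Hypothesis d_gt0 : forall i, (1 <= i < n.+1)%N -> 0 < d i.

Let N := \sum_(1 <= i < n.+1) G i * a i.
Let D := \sum_(1 <= i < n.+1) d i * G i ^+ 2.
Let B := \sum_(1 <= i < n.+1) a i / d i * a i.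

Lemma sum_shift_mul (t : R) :
  \sum_(1 <= i < n.+1) (G i + t * (a i / d i)) * a i = N + t * B.
Proof.
rewrite /N /B mulr_sumr -big_split; apply: eq_big_nat => i _ /=; ring.
Qed.

Lemma sum_shift_sqr (t : R) :
  \sum_(1 <= i < n.+1) d i * (G i + t * (a i / d i)) ^+ 2
  = D + 2 * t * N + t ^+ 2 * B.
Proof.
rewrite /D /N /B !mulr_sumr -!big_split; apply: eq_big_nat => i i_in /=.
by field; rewrite gt_eqF ?d_gt0.
Qed.

Lemma sum_shift_sqr_ge0 (t : R) :
  0 <= \sum_(1 <= i < n.+1) d i * (G i + t * (a i / d i)) ^+ 2.
Proof.
rewrite big_nat_cond; apply: sumr_ge0 => i /andP [i_in _].
by rewrite mulr_ge0 ?sqr_ge0 ?ltW ?d_gt0.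
Qed.

Lemma kempf_ratio_gt0 : 0 < kempf_ratio n d a G -> 0 < N /\ 0 < D.
Proof.
apply: div_sqrt_gt0; have := sum_shift_sqr_ge0 0.
by rewrite sum_shift_sqr mulr0 mul0r addr0 expr0n mul0r addr0.
Qed.

Lemma kempf_ratio_proportional (e : R) : 0 < kempf_ratio n d a G -> 0 < e ->
  kempf_ratio n d a (fun i => G i + e * (a i / d i)) <= kempf_ratio n d a G ->
  exists2 c, 0 < c & forall i, (1 <= i < n.+1)%N -> G i = c * (a i / d i).
Proof.
move=> K_gt0 e_gt0; rewrite /kempf_ratio sum_shift_mul sum_shift_sqr -/N -/D => no_gain.
have [N_gt0 D_gt0] := kempf_ratio_gt0 K_gt0.
have quad_ge0 t : 0 <= D + 2 * t * N + t ^+ 2 * B.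
  by rewrite -sum_shift_sqr sum_shift_sqr_ge0.
have B_gt0 : 0 < B.
  rewrite lt_def; apply/andP; split.
    apply: contraTneq (quad_ge0 (- D / N)) => ->.
    rewrite mulr0 addr0 -ltNge.
    suff -> : 2 * (- D / N) * N = - 2 * D by lra.
    by field; rewrite gt_eqF.
  rewrite /B big_nat_cond; apply: sumr_ge0 => i /andP [i_in _].
  by rewrite mulrAC -expr2 divr_ge0 ?sqr_ge0 ?ltW ?d_gt0.
exists (N / B); first by rewrite divr_gt0.
have quad_min : D + 2 * (- N / B) * N + (- N / B) ^+ 2 * B = (B * D - N ^+ 2) / B.
  by field; rewrite gt_eqF.
(* Cauchy-Schwarz gives N^2 <= B D; a strict inequality would let the step [e] increase
   the ratio, and equality makes G - (N/B) (a/d) vanish. *)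
have CS_eq : B * D = N ^+ 2.
  apply/eqP; rewrite eq_le; apply/andP; split; last first.
    by have := quad_ge0 (- N / B); rewrite quad_min pmulr_lge0 ?invr_gt0 // subr_ge0.
  rewrite leNgt; apply/negP => lt_CS; move: no_gain; rewrite leNgt => /negP; apply.
  apply: ltr_div_sqrt; rewrite ?addr_gt0 ?mulr_gt0 //.
  have -> : (N + e * B) ^+ 2 * D = N ^+ 2 * (D + 2 * e * N + e ^+ 2 * B)
      + (2 * e * N + e ^+ 2 * B) * (B * D - N ^+ 2) by ring.
  rewrite ltrDl mulr_gt0 ?subr_gt0 //.
  by rewrite ltr_wpDr ?mulr_ge0 ?sqr_ge0 ?ltW ?mulr_gt0.
have : \sum_(1 <= i < n.+1) d i * (G i + - N / B * (a i / d i)) ^+ 2 = 0.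
  by rewrite sum_shift_sqr quad_min CS_eq subrr mul0r.
move/eqP; rewrite big_nat_cond psumr_eq0; last first.
  by move=> i /andP [i_in _]; rewrite mulr_ge0 ?sqr_ge0 ?ltW ?d_gt0.
move=> /allP all0 i i_in; move: (all0 i); rewrite mem_index_iota i_in => /(_ isT) /=.
by rewrite mulf_eq0 gt_eqF ?d_gt0 //= sqrf_eq0 !mulNr subr_eq0 => /eqP.
Qed.

End Shift.
End RatioAlgebra.

Local Notation R := Rdefinitions.R.
Local Notation linR c U W := ((sq_lin c U W)%:~R : R).

Definition insert_at (T : Type) (i : nat) (x y : T) (f : nat -> T) (j : nat) : T :=
  if (j < i)%N then f j else if j == i then x else if j == i.+1 then y else f j.-1.

Section InsertAt.
Variables (T : Type) (i : nat) (x y : T) (f : nat -> T).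

Lemma insert_at_lt j : (j < i)%N -> insert_at i x y f j = f j.
Proof. by rewrite /insert_at => ->. Qed.

Lemma insert_at_gt j : (i.+1 < j)%N -> insert_at i x y f j = f j.-1.
Proof.
move=> lt_i1j; have lt_ij := ltnW lt_i1j.
by rewrite /insert_at ltnNge (ltnW lt_ij) /= !gtn_eqF.
Qed.

Lemma insert_at_shift j : y = f i -> (i < j)%N -> insert_at i x y f j = f j.-1.
Proof.
move=> -> lt_ij; rewrite /insert_at ltnNge (ltnW lt_ij) /= gtn_eqF //.
by case: eqP => // ->.
Qed.

Lemma insert_at_id : insert_at i x y f i = x.
Proof. by rewrite /insert_at ltnn eqxx. Qed.

Lemma insert_at_succ : insert_at i x y f i.+1 = y.
Proof. by rewrite /insert_at ltnNge leqnSn /= gtn_eqF // eqxx. Qed.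

Lemma insert_at_all (P : T -> Prop) n : (i <= n)%N ->
  (forall j, (j <= n)%N -> P (f j)) -> P x -> P y ->
  forall j, (j <= n.+1)%N -> P (insert_at i x y f j).
Proof.
move=> le_in Pf Px Py j le_jn; rewrite /insert_at.
case: ltnP => [lt_ji | le_ij]; first by apply: Pf; lia.
case: eqP => // ne_ji; case: eqP => // ne_ji1; apply: Pf; lia.
Qed.

Lemma insert_at_chain (r : T -> T -> Prop) m n :
  (forall j, (m <= j < n)%N -> r (f j) (f j.+1)) -> (0 < i <= n)%N -> (m <= i)%N ->
  ((m < i)%N -> r (f i.-1) x) -> r x y -> ((i < n)%N -> r y (f i.+1)) ->
  forall j, (m <= j < n.+1)%N -> r (insert_at i x y f j) (insert_at i x y f j.+1).
Proof.
move=> rf i_in le_mi rfx rxy ryf j j_in.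
case: (ltngtP j.+1 i) => [lt_ji | lt_ij | eq_j1i].
- by rewrite !insert_at_lt ?(ltnW lt_ji) //; apply: rf; lia.
- case: (ltngtP j i.+1) => [lt_ji1 | lt_i1j | eq_ji1].
  + have -> : j = i by lia.
    by rewrite insert_at_id insert_at_succ.
  + have lt_i1j1 : (i.+1 < j.+1)%N by rewrite ltnW.
    rewrite !insert_at_gt //=.
    by have := rf j.-1; rewrite prednK; [apply; lia | lia].
  + by subst j; rewrite insert_at_succ insert_at_gt //; apply: ryf; lia.
- rewrite eq_j1i insert_at_id insert_at_lt -?eq_j1i //.
  by move: rfx; rewrite -eq_j1i; apply; lia.
Qed.

End InsertAt.

Lemma sum_insert_nat (T : zmodType) (n i : nat) (h g : nat -> T) : (0 < i <= n)%N ->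
  (forall j, (j < i)%N -> g j = h j) -> (forall j, (i.+1 < j)%N -> g j = h j.-1) ->
  \sum_(1 <= j < n.+2) g j = \sum_(1 <= j < n.+1) h j - h i + g i + g i.+1.
Proof.
move=> i_in g_lt g_gt.
rewrite (@big_cat_nat _ _ _ i) /=; [|lia|lia].
rewrite [\sum_(1 <= j < n.+1) h j](@big_cat_nat _ _ _ i) /=; [|lia|lia].
rewrite [\sum_(i <= j < n.+2) g j]big_ltn; last by lia.
rewrite [\sum_(i.+1 <= j < n.+2) g j]big_ltn; last by lia.
rewrite [\sum_(i <= j < n.+1) h j]big_ltn; last by lia.
have -> : \sum_(1 <= j < i) g j = \sum_(1 <= j < i) h j.
  by apply: eq_big_nat => j /andP [_ lt_ji]; apply: g_lt.
have -> : \sum_(i.+2 <= j < n.+2) g j = \sum_(i.+1 <= j < n.+1) h j.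
  by rewrite big_add1 /=; apply: eq_big_nat => j j_in; rewrite g_gt //; lia.
rewrite [h i + _]addrC addrA addrK -!addrA; congr (_ + _).
by rewrite addrC addrA.
Qed.

Section Subquotients.
Variables (V A : finType) (src tgt : A -> V) (k : fieldType) (M : rep src tgt k).

Lemma sq_linD (c : V -> int) (U G W : subfam M) :
  sq_lin c U G + sq_lin c G W = sq_lin c U W.
Proof. by rewrite /sq_lin -big_split /=; apply: eq_bigr => v _; ring. Qed.

Lemma sq_lin_gt0 (sg : V -> int) (U W : subfam M) :
  (forall v, 0 < sg v) -> sub_lt U W -> 0 < sq_lin sg U W.
Proof.
move=> sg_gt0 [le_UW not_le_WU].
have [v lt_v] : exists v, ~~ (W v <= U v)%MS.
  apply/existsP; apply: contra_notT not_le_WU => /existsPn le_WU v.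
  by have := le_WU v; rewrite negbK.
have lt_rank : (\rank (U v) < \rank (W v))%N.
  by rewrite ltn_neqAle (mxrank_leqif_sup (le_UW v)).2 lt_v mxrankS.
rewrite /sq_lin (bigD1 v) //=; apply: ltr_wpDr.
  apply: sumr_ge0 => w _; apply: mulr_ge0; first exact: ltW.
  by rewrite subr_ge0 lez_nat mxrankS.
by rewrite mulr_gt0 ?subr_gt0 ?ltz_nat.
Qed.

Lemma sub_lt_trans (U G W : subfam M) : sub_lt U G -> sub_lt G W -> sub_lt U W.
Proof.
move=> [le_UG _] [le_GW not_le_WG]; split=> [v | le_WU].
  exact: submx_trans (le_UG v) (le_GW v).
by apply: not_le_WG => v; apply: submx_trans (le_WU v) (le_UG v).
Qed.

Lemma filtration_insert n F i (G : subfam M) :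
  filtration n F -> (0 < i <= n)%N -> is_subrep G ->
  sub_lt (F i.-1) G -> sub_lt G (F i) -> filtration n.+1 (insert_at i G (F i) F).
Proof.
move=> [_ F_subrep F0 Fn F_lt] i_in G_subrep lt_G lt_Fi.
split=> //.
- apply: (insert_at_all (P := fun U => is_subrep U)) => //; first by lia.
  by apply: F_subrep; lia.
- by rewrite insert_at_lt //; lia.
- case: (ltngtP n i) => [| lt_in | eq_ni]; first by lia.
    by rewrite insert_at_gt.
  by rewrite eq_ni insert_at_succ -eq_ni.
- move=> j lt_jn; apply: (insert_at_chain (m := 0) (n := n)) => //.
  by move=> lt_in; apply: F_lt.
Qed.

Lemma weighted_filtration_insert n F Ga i (G : subfam M) (x y : R) :
  weighted_filtration n F Ga -> (0 < i <= n)%N -> is_subrep G ->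
  sub_lt (F i.-1) G -> sub_lt G (F i) ->
  ((1 < i)%N -> Ga i.-1 < x) -> x < y -> ((i < n)%N -> y < Ga i.+1) ->
  weighted_filtration n.+1 (insert_at i G (F i) F) (insert_at i x y Ga).
Proof.
move=> [fF Ga_lt] i_in G_subrep lt_G lt_Fi lt_x lt_xy lt_y.
split; first exact: filtration_insert.
by apply: (insert_at_chain (r := fun a b => a < b)); rewrite //; lia.
Qed.

End Subquotients.

Section KempfFunction.
Variables (V A : finType) (src tgt : A -> V) (k : fieldType) (Th sg : V -> int).
Variable M : rep src tgt k.

Local Notation sgM := (linR sg (zero_sub M) (full_sub M)).

Definition kempf_coef (U W : subfam M) : R :=
  linR Th (zero_sub M) (full_sub M) * linR sg U W - sgM * linR Th U W.

Lemma kempfE n F Ga : kempf Th sg n F Ga =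
  kempf_ratio n (fun i => linR sg (F i.-1) (F i)) (fun i => kempf_coef (F i.-1) (F i)) Ga.
Proof. by []. Qed.

Lemma kempf_coefD (U G W : subfam M) :
  kempf_coef U G + kempf_coef G W = kempf_coef U W.
Proof. by rewrite /kempf_coef -(sq_linD sg U G W) -(sq_linD Th U G W) !intrD; ring. Qed.

Lemma kempf_coef_cross_gt0 (U G W : subfam M) :
  0 < sgM -> 0 < linR sg U G -> 0 < linR sg G W ->
  sq_slope Th sg U W < sq_slope Th sg U G ->
  0 < linR sg U G * kempf_coef G W - linR sg G W * kempf_coef U G.
Proof.
move=> sgM_gt0 dG_gt0 dW_gt0; rewrite /sq_slope /kempf_coef.
have dUW_gt0 := addr_gt0 dG_gt0 dW_gt0.
rewrite -(sq_linD sg U G W) -(sq_linD Th U G W) !intrD ltr_frac // => destab.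
have cross_gt0 : 0 < linR sg G W * linR Th U G - linR sg U G * linR Th G W by nra.
have := mulr_gt0 sgM_gt0 cross_gt0; nra.
Qed.

Lemma kempf_insert n F Ga i (G : subfam M) (x y : R) : (0 < i <= n)%N ->
  kempf Th sg n.+1 (insert_at i G (F i) F) (insert_at i x y Ga)
  = (\sum_(1 <= j < n.+1) Ga j * kempf_coef (F j.-1) (F j)
       - Ga i * kempf_coef (F i.-1) (F i)
       + x * kempf_coef (F i.-1) G + y * kempf_coef G (F i))
    / Num.sqrt (\sum_(1 <= j < n.+1) linR sg (F j.-1) (F j) * Ga j ^+ 2
       - linR sg (F i.-1) (F i) * Ga i ^+ 2
       + linR sg (F i.-1) G * x ^+ 2 + linR sg G (F i) * y ^+ 2).
Proof.
move=> i_in; have lt_i1i : (i.-1 < i)%N by lia.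
have ins_lt j : (j < i)%N -> insert_at i G (F i) F j.-1 = F j.-1.
  by move=> lt_ji; rewrite insert_at_lt // (leq_ltn_trans (leq_pred j)).
have ins_gt j : (i.+1 < j)%N -> insert_at i G (F i) F j.-1 = F j.-1.-1.
  by move=> lt_i1j; rewrite insert_at_shift //; lia.
rewrite kempfE /kempf_ratio.
rewrite (sum_insert_nat (h := fun j => Ga j * kempf_coef (F j.-1) (F j)) i_in).
rewrite (sum_insert_nat (h := fun j => linR sg (F j.-1) (F j) * Ga j ^+ 2) i_in).
- by rewrite /= !insert_at_id !insert_at_succ insert_at_lt.
- by move=> j lt_ji; rewrite ins_lt // !insert_at_lt.
- by move=> j lt_i1j; rewrite ins_gt // !insert_at_gt.
- by move=> j lt_ji; rewrite ins_lt // !insert_at_lt.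
- by move=> j lt_i1j; rewrite ins_gt // !insert_at_gt.
Qed.

End KempfFunction.

Section KempfMaximum.
Variables (V A : finType) (src tgt : A -> V) (k : fieldType) (Th sg : V -> int).
Hypothesis sg_gt0 : forall v, 0 < sg v.
Variable M : rep src tgt k.
Hypothesis unstable : ~ semistable M Th sg.
Variables (n : nat) (F : nat -> subfam M) (Ga : nat -> R).
Hypothesis wF : weighted_filtration n F Ga.
Hypothesis kempf_max : forall n' (F' : nat -> subfam M) (Ga' : nat -> R),
  weighted_filtration n' F' Ga' -> kempf Th sg n' F' Ga' <= kempf Th sg n F Ga.

Local Notation sgM := (linR sg (zero_sub M) (full_sub M)).
Local Notation d i := (linR sg (F i.-1) (F i)).
Local Notation a i := (kempf_coef Th sg (F i.-1) (F i)).

Lemma sigmaM_gt0 : 0 < sgM.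
Proof.
rewrite ltNge; apply/negP => sgM_le0; apply: unstable => G _ lt_0G lt_GM.
have := sq_lin_gt0 sg_gt0 (sub_lt_trans lt_0G lt_GM).
by rewrite -(ltr0z R) ltNge sgM_le0.
Qed.

Lemma kempf_max_gt0 : 0 < kempf Th sg n F Ga.
Proof.
rewrite ltNge; apply/negP => K_le0; apply: unstable => G G_subrep lt_0G lt_GM.
rewrite leNgt; apply/negP => destab.
(* The filtration 0 < G < M with weights -1 < 0 has Kempf value -a(G) / sqrt(sigma(G)). *)
pose F2 j := if j == 0%N then zero_sub M else if j == 1%N then G else full_sub M.
pose Ga2 j : R := if j == 1%N then -1 else 0.
have wF2 : weighted_filtration 2 F2 Ga2.
  split; last by case=> [|[|]] //= _; rewrite ltrN10.
  split=> //; last by case=> [|[|]].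
  by case=> [|[|[|]]] //= _ e; rewrite ?mul0mx ?sub0mx ?submx1 //; apply: G_subrep.
have dG_gt0 : 0 < linR sg (zero_sub M) G by rewrite ltr0z sq_lin_gt0.
suff : 0 < kempf Th sg 2 F2 Ga2 by move/lt_le_trans/(_ (kempf_max wF2)); rewrite ltNge K_le0.
rewrite kempfE /kempf_ratio !(big_ltn (isT : (1 < 3)%N)) !big_nat1 /=.
rewrite mul0r addr0 sqrrN expr1n mulr1 expr0n mulr0 addr0 mulN1r.
rewrite divr_gt0 ?sqrtr_gt0 // oppr_gt0.
move: destab; rewrite /sq_slope ltr_frac ?sigmaM_gt0 // /kempf_coef; lra.
Qed.

Lemma sigma_quot_gt0 i : (0 < i < n.+1)%N -> 0 < d i.
Proof.
move=> i_in; rewrite ltr0z; apply: sq_lin_gt0 => //.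
have [[_ _ _ _ F_lt] _] := wF; rewrite -[in F i](@prednK i); last by lia.
by apply: F_lt; lia.
Qed.

Lemma kempf_max_weights_proportional :
  exists2 c, 0 < c & forall i, (0 < i < n.+1)%N -> Ga i = c * (a i / d i).
Proof.
have [fF Ga_lt] := wF.
have gaps_gt0 : {in index_iota 1 n, forall j, 0 < Ga j.+1 - Ga j}.
  by move=> j; rewrite mem_index_iota subr_gt0 => /Ga_lt.
have [e e_gt0 small_e] := @exists_small_gt0 _ _ _
  (fun j => a j / d j - a j.+1 / d j.+1) _ gaps_gt0.
apply: (kempf_ratio_proportional sigma_quot_gt0 kempf_max_gt0 e_gt0).
apply: (kempf_max (F' := F)); split=> // j j_in.
by have := small_e j; rewrite /= mem_index_iota j_in mulrBr => /(_ isT); rewrite /kempf_coef; lra.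
Qed.

Lemma kempf_max_slopes_decreasing i : (0 < i < n)%N ->
  sq_slope Th sg (F i) (F i.+1) < sq_slope Th sg (F i.-1) (F i).
Proof.
move=> i_in; have [c c_gt0 Ga_prop] := kempf_max_weights_proportional.
have coef_slope j : (0 < j < n.+1)%N ->
    a j / d j = linR Th (zero_sub M) (full_sub M) - sgM * sq_slope Th sg (F j.-1) (F j).
  by move=> j_in; rewrite /kempf_coef /sq_slope; field; rewrite gt_eqF ?sigma_quot_gt0.
have := wF.2 i i_in; rewrite !Ga_prop ?(ltr_pM2l c_gt0) ?coef_slope; try lia.
by rewrite ltrD2l ltrN2 (ltr_pM2l sigmaM_gt0).
Qed.

Lemma small_split_weights i (p q K C : R) : (0 < i <= n)%N -> 0 < p -> 0 < q -> 0 < C ->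
  exists2 e, 0 < e & [/\ (1 < i)%N -> Ga i.-1 < Ga i - e * q,
    Ga i - e * q < Ga i + e * p, (i < n)%N -> Ga i + e * p < Ga i.+1 & e * K < C].
Proof.
move=> i_in p_gt0 q_gt0 C_gt0.
set bounds := [:: (q, if (1 < i)%N then Ga i - Ga i.-1 else 1);
  (p, if (i < n)%N then Ga i.+1 - Ga i else 1); (K, C)].
have bounds_gt0 : {in bounds, forall b, 0 < b.2}.
  move=> b; rewrite !inE => /or3P [] /eqP -> //=.
  - case: ifP => // lt_1i; rewrite subr_gt0 -[in Ga i](@prednK i); last by lia.
    by apply: wF.2; lia.
  - by case: ifP => // lt_in; rewrite subr_gt0; apply: wF.2; lia.
have [e e_gt0 small_e] := exists_small_gt0 fst bounds_gt0.
exists e => //; split.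
- by move=> lt_1i; have := small_e _ (mem_head _ _); rewrite /= lt_1i; lra.
- by have := mulr_gt0 e_gt0 p_gt0; have := mulr_gt0 e_gt0 q_gt0; lra.
- move=> lt_in; have /= := small_e (p, if (i < n)%N then Ga i.+1 - Ga i else 1).
  by rewrite lt_in !inE lt_in eqxx orbT => /(_ isT); lra.
- by apply: (small_e (K, C)); rewrite !inE eqxx !orbT.
Qed.

Lemma kempf_max_quotient_semistable i : (0 < i <= n)%N ->
  semistable_sq Th sg (F i.-1) (F i).
Proof.
move=> i_in G G_subrep lt_G lt_Fi; rewrite leNgt; apply/negP => destab.
have d1_gt0 : 0 < linR sg (F i.-1) G by rewrite ltr0z sq_lin_gt0.
have d2_gt0 : 0 < linR sg G (F i) by rewrite ltr0z sq_lin_gt0.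
have P_gt0 := kempf_coef_cross_gt0 sigmaM_gt0 d1_gt0 d2_gt0 destab.
set d1 := linR sg (F i.-1) G in d1_gt0 P_gt0 *.
set d2 := linR sg G (F i) in d2_gt0 P_gt0 *.
set P := d1 * _ - d2 * _ in P_gt0.
set Q := d1 * d2 * (d1 + d2).
have Q_gt0 : 0 < Q by rewrite !mulr_gt0 ?addr_gt0.
set N := \sum_(1 <= j < n.+1) Ga j * a j.
set D := \sum_(1 <= j < n.+1) d j * Ga j ^+ 2.
have [N_gt0 D_gt0] := kempf_ratio_gt0 sigma_quot_gt0 kempf_max_gt0.
have [e e_gt0 [lt_x lt_xy lt_y e_NQ]] :=
  small_split_weights (N * Q) i_in d1_gt0 d2_gt0 (mulr_gt0 P_gt0 D_gt0).
(* Splitting Ga_i into Ga_i - e d2 < Ga_i + e d1 leaves the linear part of the squared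
   norm unchanged: the numerator gains e P, the squared norm only e^2 Q. *)
have := kempf_max (weighted_filtration_insert wF i_in G_subrep lt_G lt_Fi lt_x lt_xy lt_y).
rewrite kempf_insert // leNgt => /negP; apply.
have -> : N - Ga i * a i + (Ga i - e * d2) * kempf_coef Th sg (F i.-1) G
    + (Ga i + e * d1) * kempf_coef Th sg G (F i) = N + e * P.
  by rewrite -(kempf_coefD _ _ _ G) /P; ring.
have -> : D - d i * Ga i ^+ 2 + d1 * (Ga i - e * d2) ^+ 2 + d2 * (Ga i + e * d1) ^+ 2
    = D + e ^+ 2 * Q.
  by rewrite -(sq_linD sg _ G) intrD -/d1 -/d2 /Q; ring.
exact: ltr_div_sqrt_step.
Qed.

End KempfMaximum.

Theorem theorem5p3 (V A : finType) (src tgt : A -> V) (k : closedFieldType)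
  (Th sg : V -> int) (sg_pos : forall v, 0 < sg v)
  (M : rep src tgt k)
  (unstable : ~ semistable M Th sg)
  (n : nat) (F : nat -> subfam M) (Ga : nat -> Rdefinitions.R)
  (wF : weighted_filtration n F Ga)
  (kempf_max : forall (n' : nat) (F' : nat -> subfam M) (Ga' : nat -> Rdefinitions.R),
      weighted_filtration n' F' Ga' -> kempf Th sg n' F' Ga' <= kempf Th sg n F Ga) :
  is_HN_filtration Th sg n F.
Proof.
split; first by case: wF.
- move=> i; exact (kempf_max_slopes_decreasing sg_pos unstable wF kempf_max (i := i)).
- move=> i; exact (kempf_max_quotient_semistable sg_pos unstable wF kempf_max (i := i)).
Qed.
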